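(* Let $\mathcal U,\mathcal V,\mathcal X$ be real finite-dimensional Euclidean spaces, $f:\mathcal U\to(-\infty,+\infty]$ closed proper convex, $g(v)=\frac12\langle v,\Sigma_g v\rangle-\langle b,v\rangle$ with $\Sigma_g\succeq0$ self-adjoint and $b\in\mathcal V$, $\mathcal F:\mathcal X\to\mathcal U$, $\mathcal G:\mathcal X\to\mathcal V$ linear, $c\in\mathcal X$, $\sigma>0$, and $\mathcal L_\sigma(u,v;x)=f(u)+g(v)+\langle x,\mathcal F^*u+\mathcal G^*v-c\rangle+\frac\sigma2\|\mathcal F^*u+\mathcal G^*v-c\|^2$. Let $\mathcal E_g\succ0$ be self-adjoint with $\mathcal E_g\succeq\sigma^{-1}\Sigma_g+\mathcal G\mathcal G^*$, $\mathcal T_g:=\mathcal E_g-\sigma^{-1}\Sigma_g-\mathcal G\mathcal G^*$, $\mathcal T_f\succeq 0$ self-adjoint on $\mathcal U$, $\widehat{\mathcal T}_f:=\mathcal T_f+\mathcal F\mathcal G^*\mathcal E_g^{-1}\mathcal G\mathcal F^*$. Let $\bar u\in\mathcal U,\bar v\in\mathcal V,\bar x\in\mathcal X$, $\bar c:=c-\mathcal F^*\bar u-\mathcal G^*\bar v$, $\bar\delta_g:=\mathcal F\mathcal G^*\mathcal E_g^{-1}(b-\mathcal G\bar x-\Sigma_g\bar v+\sigma\mathcal G\bar c)$, $\bar\alpha:=\sigma^{-1}b+\mathcal T_g\bar v+\mathcal G(c-\sigma^{-1}\bar x)$, and $$v':=\operatorname{argmin}_v\ \mathcal L_\sigma(\bar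 u,v;\bar x)+\tfrac\sigma2\|v-\bar v\|^2_{\mathcal T_g}=\mathcal E_g^{-1}(\bar\alpha-\mathcal G\mathcal F^*\bar u).$$ Let $(u^+,v^+)$ be the optimal solution of $$\min_{u,v}\ \mathcal L_\sigma(u,v;\bar x)+\tfrac\sigma2\|u-\bar u\|^2_{\widehat{\mathcal T}_f}+\tfrac\sigma2\|v-\bar v\|^2_{\mathcal T_g}.$$ Then $(u^+,v^+)$ is generated exactly by the procedure $$u^+=\operatorname{argmin}_u\ \mathcal L_\sigma(u,\bar v;\bar x)+\langle\bar\delta_g,u\rangle+\tfrac\sigma2\|u-\bar u\|^2_{\mathcal T_f},\qquad v^+=\operatorname{argmin}_v\ \mathcal L_\sigma(u^+,v;\bar x)+\tfrac\sigma2\|v-\bar v\|^2_{\mathcal T_g}=\mathcal E_g^{-1}(\bar\alpha-\mathcal G\mathcal F^*u^+),$$ and equivalently also by the procedure $$u^+=\operatorname{argmin}_u\ \mathcal L_\sigma(u,v';\bar x)+\tfrac\sigma2\|u-\bar u\|^2_{\mathcal T_f},\qquad v^+=\operatorname{argmin}_v\ \mathcal L_\sigma(u^+,v;\bar x)+\tfrac\sigma2\|v-\bar v\|^2_{\mathcal T_g}=\mathcal E_g^{-1}(\bar\alpha-\mathcal G\mathcal F^*u^+).$$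
   Context: $\|w\|_{\mathcal T}^2:=\langle w,\mathcal T w\rangle$; $\succ0$/$\succeq0$ denote positive definite/semidefinite; $\mathcal A\succeq\mathcal B$ means $\mathcal A-\mathcal B\succeq0$. *)

(* Finite-dimensional Euclidean spaces U, V, X are modelled as column-vector
   spaces 'cV[R]_m, 'cV[R]_n, 'cV[R]_p (R : realType) with the standard inner
   product; linear maps are matrices, adjoints are transposes. *)
From HB Require Import structures.
From mathcomp Require Import all_boot all_order all_algebra.
From mathcomp Require Import all_classical all_reals all_analysis.
Set Implicit Arguments. Unset Strict Implicit. Unset Printing Implicit Defensive.
Import Order.TTheory GRing.Theory Num.Theory.
Local Open Scope ring_scope.
Local Open Scope classical_set_scope.

Section Defs.
Variable R : realType.

Definition dotv (k : nat) (u w : 'cV[R]_k) : R := \sum_(i < k) u i 0 * w i 0.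

Definition qnorm (k : nat) (T : 'M[R]_k) (w : 'cV[R]_k) : R := dotv w (T *m w).

Definition selfadjoint (k : nat) (A : 'M[R]_k) : Prop := A^T = A.
Definition psd (k : nat) (A : 'M[R]_k) : Prop :=
  selfadjoint A /\ forall w : 'cV[R]_k, 0 <= qnorm A w.
Definition pd (k : nat) (A : 'M[R]_k) : Prop :=
  selfadjoint A /\ forall w : 'cV[R]_k, w != 0 -> 0 < qnorm A w.

Definition proper_fun (k : nat) (f : 'cV[R]_k -> \bar R) : Prop :=
  (forall u, f u != -oo%E) /\ exists u, f u \is a fin_num.

Definition convex_fun (k : nat) (f : 'cV[R]_k -> \bar R) : Prop :=
  forall (a b : 'cV[R]_k) (t : R), 0 < t < 1 ->
    let w := (t *: a + (1 - t) *: b)%R in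
    (f w <= t%:E * f a + (1 - t)%:E * f b)%E.

(* closed = lower semicontinuous = all sublevel sets closed *)
Definition closed_fun (k : nat) (f : 'cV[R]_k -> \bar R) : Prop :=
  forall r : R, closed ([set u | (f u <= r%:E)%E] : set 'cV[R^o]_k).

Definition is_argmin (T : Type) (phi : T -> \bar R) (z : T) : Prop :=
  forall y, (phi z <= phi y)%E.

Definition gquad (n : nat) (Sg : 'M[R]_n) (b : 'cV[R]_n) (v : 'cV[R]_n) : R :=
  2^-1 * dotv v (Sg *m v) - dotv b v.

Definition Lag (m n p : nat) (f : 'cV[R]_m -> \bar R) (Sg : 'M[R]_n)
  (b : 'cV[R]_n) (F : 'M[R]_(m, p)) (G : 'M[R]_(n, p)) (c : 'cV[R]_p)
  (sigma : R) (u : 'cV[R]_m) (v : 'cV[R]_n) (x : 'cV[R]_p) : \bar R :=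
  let r := F^T *m u + G^T *m v - c in
  let s : R := (gquad Sg b v + dotv x r + sigma / 2 * dotv r r)%R in
  (f u + s%:E)%E.

End Defs.

From HB Require Import structures.
From mathcomp Require Import all_boot all_order all_algebra.
From mathcomp Require Import all_classical all_reals all_analysis.
From mathcomp Require Import ring.
Set Implicit Arguments.
Unset Strict Implicit.
Unset Printing Implicit Defensive.
Import Order.TTheory GRing.Theory Num.Theory.
Local Open Scope ring_scope.

(* For fixed u the v-part of the augmented Lagrangian plus the Tg-proximal term is
   a quadratic with Hessian sigma Eg, minimized at vopt u = Eg^-1 (alpha - G F^T u);
   completing the square, the joint objective is f u + J u + sigma/2 ||v - vopt u||^2_Eg,
   so its minimizers are the pairs (u, vopt u) with u minimizing f + J.  As vopt is
   affine in u, the extra term ||u - ub||^2 of F G^T Eg^-1 G F^T in Tfh exactly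
   compensates the u-dependence of the Eg-distance from vopt u to vb (which leaves the
   linear correction dg) or to vopt ub; hence J differs from the u-objective of either
   procedure by a constant. *)

Section InnerProduct.
Variables (R : realType) (k : nat).
Implicit Types (u w : 'cV[R]_k) (T : 'M[R]_k).

Lemma dotvC u w : dotv u w = dotv w u.
Proof. by apply: eq_bigr => i _; rewrite mulrC. Qed.

Lemma dotvDl u1 u2 w : dotv (u1 + u2) w = dotv u1 w + dotv u2 w.
Proof. by rewrite /dotv -big_split; apply: eq_bigr => i _; rewrite mxE mulrDl. Qed.

Lemma dotvZl a u w : dotv (a *: u) w = a * dotv u w.
Proof. by rewrite /dotv mulr_sumr; apply: eq_bigr => i _; rewrite mxE mulrA. Qed.

Lemma dotvDr u w1 w2 : dotv u (w1 + w2) = dotv u w1 + dotv u w2.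
Proof. by rewrite dotvC dotvDl !(dotvC _ u). Qed.

Lemma dotvZr a u w : dotv u (a *: w) = a * dotv u w.
Proof. by rewrite dotvC dotvZl dotvC. Qed.

Lemma dotvNl u w : dotv (- u) w = - dotv u w.
Proof. by rewrite -scaleN1r dotvZl mulN1r. Qed.

Lemma dotvNr u w : dotv u (- w) = - dotv u w.
Proof. by rewrite dotvC dotvNl dotvC. Qed.

Lemma dotv0r u : dotv u 0 = 0.
Proof. by rewrite /dotv big1 // => i _; rewrite mxE mulr0. Qed.

Lemma dotv_mulmx l (A : 'M[R]_(k, l)) u (w : 'cV[R]_l) :
  dotv u (A *m w) = dotv (A^T *m u) w.
Proof.
suff dotvE k' (x y : 'cV[R]_k') : dotv x y = (x^T *m y) 0 0.
  by rewrite !dotvE trmx_mul trmxK mulmxA.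
by rewrite /dotv !mxE; apply: eq_bigr => i _; rewrite mxE.
Qed.

Lemma dotv_sym T u w : T^T = T -> dotv u (T *m w) = dotv w (T *m u).
Proof. by move=> symT; rewrite dotv_mulmx symT dotvC. Qed.

Lemma qnorm0 T : qnorm T 0 = 0.
Proof. by rewrite /qnorm mulmx0 dotv0r. Qed.

Lemma qnormDl T1 T2 w : qnorm (T1 + T2) w = qnorm T1 w + qnorm T2 w.
Proof. by rewrite /qnorm mulmxDl dotvDr. Qed.

Lemma qnormD T u w : T^T = T ->
  qnorm T (u + w) = qnorm T u + 2 * dotv w (T *m u) + qnorm T w.
Proof.
move=> symT; rewrite /qnorm mulmxDr !dotvDl !dotvDr (dotv_sym u w symT).
by rewrite addrA mulr2n mulrDl mul1r -!addrA (addrCA (dotv u (T *m u))).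
Qed.

Lemma qnormB T u w : T^T = T ->
  qnorm T (u - w) = qnorm T u - 2 * dotv u (T *m w) + qnorm T w.
Proof.
move=> symT; rewrite qnormD // /qnorm mulmxN !dotvNl dotvNr opprK.
by rewrite (dotv_sym w u symT) mulrN.
Qed.

Lemma pd_qnorm_ge0 T w : pd T -> 0 <= qnorm T w.
Proof.
case=> _ T_pos; have [->|w_neq0] := eqVneq w 0; first by rewrite qnorm0.
exact/ltW/T_pos.
Qed.

Lemma pd_qnorm_eq0 T w : pd T -> (qnorm T w == 0) = (w == 0).
Proof.
case=> _ T_pos; have [->|w_neq0] := eqVneq w 0; first by rewrite qnorm0 eqxx.
by rewrite gt_eqF // T_pos.
Qed.

Lemma pd_unitmx T : pd T -> T \in unitmx.
Proof.
move=> T_pd; rewrite unitmxE unitfE; apply/negP => /det0P [w w_neq0 wT0].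
have := pd_qnorm_eq0 w^T T_pd; rewrite trmx_eq0 (negbTE w_neq0) /qnorm.
by rewrite -T_pd.1 -trmx_mul wT0 trmx0 dotv0r eqxx.
Qed.

End InnerProduct.

Section InverseWeightedNorm.
Variables (R : realType) (k l : nat) (E : 'M[R]_k) (A : 'M[R]_(k, l)).
Hypotheses (E_sym : E^T = E) (E_unit : E \in unitmx).

Lemma qnorm_invmx z :
  qnorm E (invmx E *m (A *m z)) = qnorm (A^T *m invmx E *m A) z.
Proof. by rewrite /qnorm mulKVmx // dotvC -!mulmxA dotv_mulmx trmxK. Qed.

Lemma dotv_invmx z w : dotv (invmx E *m (A *m z)) (E *m w) = dotv z (A^T *m w).
Proof. by rewrite dotv_mulmx E_sym mulKVmx // dotv_mulmx trmxK. Qed.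

End InverseWeightedNorm.

Section Argmin.
Variables (R : realType) (T : Type).
Local Open Scope ereal_scope.

Lemma argmin_shift (phi psi : T -> \bar R) (k : R) z :
  (forall x, phi x = psi x + k%:E) -> is_argmin phi z <-> is_argmin psi z.
Proof. by move=> phiE; split=> z_min y; have := z_min y; rewrite !phiE leeD2rE. Qed.

Lemma argmin_fin_num (f : T -> \bar R) (a : T -> R) z :
  (forall x, f x != -oo) -> (exists x, f x \is a fin_num) ->
  is_argmin (fun x => f x + (a x)%:E) z -> f z \is a fin_num.
Proof.
move=> f_ninfty [x fx_fin] /(_ x).
rewrite fin_numE f_ninfty /=; apply: contraTN => /eqP ->.
by move: fx_fin; case: (f x).
Qed.

Lemma argmin_graph (U : Type) (f : T -> \bar R) (a : T -> R) (q : T -> U -> R)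
    (g : T -> U) :
  (forall x, f x != -oo) -> (exists x, f x \is a fin_num) ->
  (forall x y, (0 <= q x y)%R) -> (forall x y, q x y = 0%R <-> y = g x) ->
  forall x y, is_argmin (fun xy : T * U => f xy.1 + (a xy.1 + q xy.1 xy.2)%:E) (x, y)
    <-> is_argmin (fun x => f x + (a x)%:E) x /\ y = g x.
Proof.
move=> f_ninfty f_proper q_ge0 q_eq0 x y.
have q_graph x' : q x' (g x') = 0%R by apply/q_eq0.
have le_penalty x' y' : f x' + (a x')%:E <= f x' + (a x' + q x' y')%:E.
  by rewrite leeD2l // lee_fin lerDl.
split=> [xy_min | [x_min ->] [x' y'] /=].
  have x_min : is_argmin (fun x => f x + (a x)%:E) x.
    move=> x'; apply: le_trans (le_penalty x y) (le_trans (xy_min (x', g x')) _) => /=.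
    by rewrite q_graph addr0.
  split=> //; apply/q_eq0/eqP; rewrite eq_le q_ge0 andbT.
  have := xy_min (x, g x); rewrite /= q_graph addr0.
  by rewrite leeD2lE ?(argmin_fin_num f_ninfty f_proper x_min) // lee_fin gerDl.
by rewrite q_graph addr0; apply: le_trans (x_min x') (le_penalty x' y').
Qed.

End Argmin.

Ltac mx_expand :=
  repeat first [ rewrite mulmxDr | rewrite mulmxDl | rewrite mulmxBr | rewrite mulmxBl
  | rewrite mulmxN | rewrite mulNmx | rewrite mulmxA | rewrite scalerDr | rewrite scalerBr
  | rewrite scalerN | rewrite scalerA | rewrite -scalemxAl | rewrite -scalemxAr ].
Ltac mx_field := apply/matrixP => i j; rewrite !mxE; field.

Section ProximalSGS.
Variables (R : realType) (m n p : nat) (f : 'cV[R]_m -> \bar R).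
Variables (Sg : 'M[R]_n) (b : 'cV[R]_n) (F : 'M[R]_(m, p)) (G : 'M[R]_(n, p)).
Variables (c : 'cV[R]_p) (sigma : R) (Eg : 'M[R]_n) (Tf : 'M[R]_m).
Variables (ub : 'cV[R]_m) (vb : 'cV[R]_n) (xb : 'cV[R]_p).
Hypotheses (f_ninfty : forall u, f u != -oo%E) (f_proper : exists u, f u \is a fin_num).
Hypotheses (Sg_sym : Sg^T = Sg) (sigma_gt0 : 0 < sigma) (Eg_pd : pd Eg).

Let sigma_neq0 : sigma != 0 := lt0r_neq0 sigma_gt0.
Let Eg_sym : Eg^T = Eg := Eg_pd.1.
Let Eg_unit : Eg \in unitmx := pd_unitmx Eg_pd.

Let Eg_penalty_ge0 w : 0 <= sigma / 2 * qnorm Eg w.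
Proof. by rewrite mulr_ge0 ?divr_ge0 ?(ltW sigma_gt0) ?(pd_qnorm_ge0 _ Eg_pd). Qed.

Definition Tg := Eg - sigma^-1 *: Sg - G *m G^T.
Definition alpha := sigma^-1 *: b + Tg *m vb + G *m (c - sigma^-1 *: xb).
Definition vopt (u : 'cV[R]_m) := invmx Eg *m (alpha - G *m F^T *m u).

Definition residual (u : 'cV[R]_m) (v : 'cV[R]_n) := F^T *m u + G^T *m v - c.
Definition lag_smooth (u : 'cV[R]_m) (v : 'cV[R]_n) :=
  gquad Sg b v + dotv xb (residual u v) + sigma / 2 * dotv (residual u v) (residual u v).
Definition vobj (u : 'cV[R]_m) (v : 'cV[R]_n) :=
  lag_smooth u v + sigma / 2 * qnorm Tg (v - vb).
Definition vobj_grad (u : 'cV[R]_m) (v : 'cV[R]_n) := Sg *m v - b + G *m xb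
  + sigma *: (G *m residual u v) + sigma *: (Tg *m (v - vb)).

Lemma Tg_sym : Tg^T = Tg.
Proof. by rewrite /Tg !linearB linearZ /= Eg_sym Sg_sym trmx_mul trmxK. Qed.

Lemma vobj_taylor (u : 'cV[R]_m) (v w : 'cV[R]_n) :
  vobj u (v + w) = vobj u v + dotv w (vobj_grad u v) + sigma / 2 * qnorm Eg w.
Proof.
have residualD : residual u (v + w) = residual u v + G^T *m w.
  by rewrite /residual mulmxDr addrA (addrAC _ (G^T *m w)).
have EgE : dotv w (Eg *m w) =
    dotv w (Tg *m w) + sigma^-1 * dotv w (Sg *m w) + dotv (G^T *m w) (G^T *m w).
  rewrite -dotv_mulmx -dotvZr -!dotvDr; congr dotv.
  by rewrite /Tg !mulmxDl !mulNmx -scalemxAl mulmxA (addrAC _ (- _)) !subrK.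
rewrite /vobj /lag_smooth /gquad /vobj_grad /qnorm residualD EgE.
have -> : v + w - vb = (v - vb) + w by rewrite addrAC.
move: (residual u v) (v - vb) => r d.
rewrite !mulmxDr !dotvDl !dotvDr !dotvZr dotvNr.
rewrite (dotv_sym v w Sg_sym) (dotv_sym d w Tg_sym) (dotvC w b) !(dotv_mulmx G w).
rewrite (dotvC (G^T *m w) xb) (dotvC (G^T *m w) r).
by field.
Qed.

Lemma vobj_grad_vopt u : vobj_grad u (vopt u) = 0.
Proof.
have : Eg *m vopt u = alpha - G *m F^T *m u by rewrite mulKVmx.
move: (vopt u) => v Ev.
by rewrite /vobj_grad /residual /Tg; mx_expand; rewrite Ev /alpha /Tg; mx_expand; mx_field.
Qed.

Lemma vobj_complete_square u v :
  vobj u v = vobj u (vopt u) + sigma / 2 * qnorm Eg (v - vopt u).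
Proof.
by rewrite -{1}(subrK (vopt u) v) addrC vobj_taylor vobj_grad_vopt dotv0r addr0.
Qed.

Definition coupling := F *m G^T *m invmx Eg *m G *m F^T.
Definition dg := F *m G^T *m invmx Eg *m
  (b - G *m xb - Sg *m vb + sigma *: (G *m (c - F^T *m ub - G^T *m vb))).

Lemma vopt_sub u : vopt ub - vopt u = invmx Eg *m (G *m F^T *m (u - ub)).
Proof. by rewrite /vopt; mx_expand; mx_field. Qed.

Lemma qnorm_vopt_sub u : qnorm Eg (vopt ub - vopt u) = qnorm coupling (u - ub).
Proof. by rewrite vopt_sub qnorm_invmx // trmx_mul trmxK /coupling !mulmxA. Qed.

Lemma dotv_vopt_sub u w :
  dotv (vopt ub - vopt u) (Eg *m w) = dotv (u - ub) (F *m G^T *m w).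
Proof. by rewrite vopt_sub dotv_invmx // trmx_mul trmxK. Qed.

Lemma dgE : dg = sigma *: (F *m G^T *m (vopt ub - vb)).
Proof.
have gapE : b - G *m xb - Sg *m vb + sigma *: (G *m (c - F^T *m ub - G^T *m vb))
    = Eg *m (sigma *: (vopt ub - vb)).
  have : Eg *m vopt ub = alpha - G *m F^T *m ub by rewrite mulKVmx.
  by move: (vopt ub) => v Ev; mx_expand; rewrite Ev /alpha /Tg; mx_expand; mx_field.
by rewrite /dg gapE -mulmxA mulKmx // scalemxAr.
Qed.

Definition vgap := vopt ub - vb.
Definition joint_reduced u := vobj u (vopt u) + sigma / 2 * qnorm (Tf + coupling) (u - ub).
Definition proc1_smooth u := lag_smooth u vb + dotv dg u + sigma / 2 * qnorm Tf (u - ub).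

Lemma vobj_at_vb u : vobj u vb = lag_smooth u vb.
Proof. by rewrite /vobj subrr qnorm0 mulr0 addr0. Qed.

Lemma joint_reduced_proc1 u :
  joint_reduced u = proc1_smooth u - (sigma / 2 * qnorm Eg vgap + dotv dg ub).
Proof.
rewrite /joint_reduced /proc1_smooth qnormDl.
have := vobj_complete_square u vb; rewrite vobj_at_vb.
have -> : vb - vopt u = (vopt ub - vopt u) - vgap.
  by rewrite /vgap opprB [RHS]addrC addrA subrK.
rewrite [qnorm Eg _]qnormB // qnorm_vopt_sub dotv_vopt_sub => ->.
have -> : dotv dg u = dotv dg ub + sigma * dotv (u - ub) (F *m G^T *m vgap).
  by rewrite -{1}(subrK ub u) dotvDr addrC; congr (_ + _); rewrite dgE dotvZl dotvC.
by field.
Qed.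

Lemma proc2_joint_reduced u :
  lag_smooth u (vopt ub) + sigma / 2 * qnorm Tf (u - ub)
  = joint_reduced u - sigma / 2 * qnorm Tg vgap.
Proof.
have -> : lag_smooth u (vopt ub) = vobj u (vopt ub) - sigma / 2 * qnorm Tg vgap.
  by rewrite /vobj addrK.
rewrite vobj_complete_square qnorm_vopt_sub.
by rewrite /joint_reduced qnormDl; ring.
Qed.

Lemma LagE u v : Lag f Sg b F G c sigma u v xb = (f u + (lag_smooth u v)%:E)%E.
Proof. by []. Qed.

Definition vsub u v :=
  (Lag f Sg b F G c sigma u v xb + (sigma / 2 * qnorm Tg (v - vb))%:E)%E.
Definition joint (uv : 'cV[R]_m * 'cV[R]_n) :=
  (Lag f Sg b F G c sigma uv.1 uv.2 xb + (sigma / 2 * qnorm (Tf + coupling) (uv.1 - ub)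
                                          + sigma / 2 * qnorm Tg (uv.2 - vb))%:E)%E.
Definition proc1 u :=
  (Lag f Sg b F G c sigma u vb xb + (dotv dg u + sigma / 2 * qnorm Tf (u - ub))%:E)%E.
Definition proc2 u :=
  (Lag f Sg b F G c sigma u (vopt ub) xb + (sigma / 2 * qnorm Tf (u - ub))%:E)%E.

Lemma vsub_argminP u v : f u \is a fin_num -> is_argmin (vsub u) v <-> v = vopt u.
Proof.
move=> fu_fin.
have vsubE y : vsub u y =
    (f u + (vobj u (vopt u))%:E + (sigma / 2 * qnorm Eg (y - vopt u))%:E)%E.
  by rewrite /vsub LagE -addeA -EFinD -/(vobj u y) vobj_complete_square EFinD addeA.
have min_fin : (f u + (vobj u (vopt u))%:E)%E \is a fin_num by rewrite fin_numD fu_fin.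
split=> [v_min | -> y].
  have := v_min (vopt u); rewrite !vsubE subrr qnorm0 mulr0 leeD2lE // lee_fin.
  rewrite pmulr_rle0 ?divr_gt0 // => qv_le0.
  apply/eqP; rewrite -subr_eq0 -(pd_qnorm_eq0 _ Eg_pd).
  by rewrite eq_le qv_le0 pd_qnorm_ge0.
rewrite !vsubE subrr qnorm0 mulr0 leeD2l // lee_fin.
exact: Eg_penalty_ge0.
Qed.

Lemma jointE : joint = fun uv =>
  (f uv.1 + (joint_reduced uv.1 + sigma / 2 * qnorm Eg (uv.2 - vopt uv.1))%:E)%E.
Proof.
apply/funext => -[u v]; rewrite /joint LagE -addeA -EFinD /joint_reduced /=.
congr (_ + _%:E).
by rewrite [RHS]addrAC -vobj_complete_square /vobj; ring.
Qed.

Lemma joint_argminP u v :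
  is_argmin joint (u, v) <->
  is_argmin (fun u => f u + (joint_reduced u)%:E)%E u /\ v = vopt u.
Proof.
rewrite jointE.
apply: (argmin_graph (q := fun x y => sigma / 2 * qnorm Eg (y - vopt x)) joint_reduced)
  => // x y.
split=> [/eqP | ->]; last by rewrite subrr qnorm0 mulr0.
rewrite mulf_eq0 (negbTE (lt0r_neq0 _)) ?divr_gt0 //= (pd_qnorm_eq0 _ Eg_pd) subr_eq0.
by move/eqP.
Qed.

Lemma joint_argmin_procP (proc : 'cV[R]_m -> \bar R) (k : R) :
  (forall u, f u + (joint_reduced u)%:E = proc u + k%:E)%E ->
  forall u v, is_argmin joint (u, v) <->
    [/\ is_argmin proc u, is_argmin (vsub u) v & v = vopt u].
Proof.
move=> procE u v; split=> [/joint_argminP [u_min ->] | [u_min _ ->]].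
  split=> //; first exact/(argmin_shift _ procE).
  by apply/(vsub_argminP _ (argmin_fin_num f_ninfty f_proper u_min)).
by apply/joint_argminP; split=> //; apply/(argmin_shift _ procE).
Qed.

Lemma proc1E u : (f u + (joint_reduced u)%:E =
  proc1 u + (- (sigma / 2 * qnorm Eg vgap + dotv dg ub))%:E)%E.
Proof.
rewrite joint_reduced_proc1 /proc1 LagE -!addeA -!EFinD /proc1_smooth.
by congr (_ + _%:E); ring.
Qed.

Lemma proc2E u : (f u + (joint_reduced u)%:E = proc2 u + (sigma / 2 * qnorm Tg vgap)%:E)%E.
Proof.
rewrite /proc2 LagE -!addeA -!EFinD; congr (_ + _%:E).
by rewrite addrA proc2_joint_reduced subrK.
Qed.

End ProximalSGS.

Theorem proposition2p2 (R : realType) (m n p : nat)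
  (f : 'cV[R]_m -> \bar R) (Sg : 'M[R]_n) (b : 'cV[R]_n)
  (F : 'M[R]_(m, p)) (G : 'M[R]_(n, p)) (c : 'cV[R]_p) (sigma : R)
  (Eg : 'M[R]_n) (Tf : 'M[R]_m)
  (ub : 'cV[R]_m) (vb : 'cV[R]_n) (xb : 'cV[R]_p) :
  closed_fun f -> proper_fun f -> convex_fun f ->
  psd Sg -> 0 < sigma ->
  pd Eg -> psd (Eg - sigma^-1 *: Sg - G *m G^T) ->
  psd Tf ->
  let L := Lag f Sg b F G c sigma in
  let Tg := Eg - sigma^-1 *: Sg - G *m G^T in
  let Tfh := Tf + F *m G^T *m invmx Eg *m G *m F^T in
  let cbar := c - F^T *m ub - G^T *m vb in
  let dg := F *m G^T *m invmx Eg *m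
              (b - G *m xb - Sg *m vb + sigma *: (G *m cbar)) in
  let alpha := sigma^-1 *: b + Tg *m vb + G *m (c - sigma^-1 *: xb) in
  let vsub := fun (u : 'cV[R]_m) (v : 'cV[R]_n) =>
                (L u v xb + (sigma / 2 * qnorm Tg (v - vb))%:E)%E in
  let vformula := fun u : 'cV[R]_m => invmx Eg *m (alpha - G *m F^T *m u) in
  let v' := vformula ub in
  let joint := fun uv : 'cV[R]_m * 'cV[R]_n =>
                (L uv.1 uv.2 xb + (sigma / 2 * qnorm Tfh (uv.1 - ub)
                                  + sigma / 2 * qnorm Tg (uv.2 - vb))%:E)%E in
  let proc1 := fun u : 'cV[R]_m =>
                (L u vb xb + (dotv dg u + sigma / 2 * qnorm Tf (u - ub))%:E)%E in
  let proc2 := fun u : 'cV[R]_m =>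
                (L u v' xb + (sigma / 2 * qnorm Tf (u - ub))%:E)%E in
  (forall u v, f u \is a fin_num -> (is_argmin (vsub u) v <-> v = vformula u)) /\
  (forall up vp, is_argmin joint (up, vp) <->
     [/\ is_argmin proc1 up, is_argmin (vsub up) vp & vp = vformula up]) /\
  (forall up vp, is_argmin joint (up, vp) <->
     [/\ is_argmin proc2 up, is_argmin (vsub up) vp & vp = vformula up]).
Proof.
(* Closedness and convexity of f and the semidefiniteness of Sg, Tg and Tf only serve
   to make the minimizers exist; the equivalences hold without them. *)
move=> _ [f_ninfty f_proper] _ [Sg_sym _] sigma_gt0 Eg_pd _ _ /=.
split; first by move=> u v; apply: vsub_argminP.
by split; apply: joint_argmin_procP => //; [exact: proc1E | exact: proc2E].
Qed.
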